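(* Let $n\ge d\ge 1$, let $\{\tilde Q(\theta):\theta\in\Theta\}$ be an orthogonal reduction parameterization of $O(d+1)$ to $e_1$, with blocks $\tilde Q(\theta)=\begin{pmatrix}\mu(\theta)&y(\theta)^*\\ x(\theta)&\tilde O(\theta)\end{pmatrix}$, and let $Q^{(k)}(\theta)$ be its embedding as defined below. Define $\Phi:\Theta^n\to\mathbb{R}^{(n+d)\times n}$ by $\Phi(\theta_1,\dots,\theta_n)=Q^{(n)}(\theta_n)\cdots Q^{(1)}(\theta_1)\begin{pmatrix}\mathbb{I}_n\\ 0_{d,n}\end{pmatrix}$, and identify a pair $(A,C)$ with its stack $\begin{pmatrix} C\\ A\end{pmatrix}$. Then $\Phi$ restricted to $\{(\theta_1,\dots,\theta_n):\mu(\theta_k)>0\ \forall k\}$ is a one-to-one correspondence onto the set of strict OTSON pairs, and $\Phi$ restricted to $\{(\theta_1,\dots,\theta_n):\mu(\theta_k)\neq 0\ \forall k\}$ is a one-to-one correspondence onto the set of unreduced OTSON pairs.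
   Context: ${}^*$ denotes transpose; $A$ is real $n\times n$, $C$ real $d\times n$, $Q=\begin{pmatrix} C\\ A\end{pmatrix}$. $(A,C)$ is OTSON if $A^*A=\mathbb{I}_n-C^*C$ and $Q_{i,j}=0$ for $j>i$; it is unreduced if $Q_{i,i}\ne 0$ for all $1\le i\le n$, and strict if $Q_{i,i}>0$ for all $1\le i\le n$. An orthogonal reduction parameterization (ORP) of $O(m)$ to $e_k$ is a family $\{\tilde Q(\theta):\theta\in\Theta\}$, $\Theta\subset\mathbb{R}^{m-1}$, of real orthogonal $m\times m$ matrices such that for every nonzero $h\in\mathbb{R}^m$ there is a unique $\theta(h)\in\Theta$ with $\tilde Q(\theta)^*h=\|h\|e_k$. Here $\mu\in\mathbb{R}$, $x,y\in\mathbb{R}^d$, $\tilde O\in\mathbb{R}^{d\times d}$, and the embedding is $Q^{(k)}(\theta)=\mathbb{I}_{k-1}\oplus\begin{pmatrix}\mu&0_{1,n-k}&y^*\\ 0_{n-k,1}&\mathbb{I}_{n-k}&0_{n-k,d}\\ x&0_{d,n-k}&\tilde O\end{pmatrix}$ (all blocks evaluated at $\theta$), an $(n+d)\times(n+d)$ matrix. *)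

From HB Require Import structures.
From mathcomp Require Import all_boot all_order all_algebra.
From mathcomp Require Import reals.
Set Implicit Arguments. Unset Strict Implicit. Unset Printing Implicit Defensive.
Import Order.TTheory GRing.Theory Num.Theory.
Local Open Scope ring_scope.

Section Defs.
Variable R : realType.

Definition vnorm m (h : 'cV[R]_m) : R := Num.sqrt (\sum_i h i 0 ^+ 2).

Definition orthogonal_mx m (M : 'M[R]_m) : Prop := M^T *m M = 1%:M.

(* Orthogonal reduction parameterization of O(m.+1) to e_k (k : 'I_m.+1,
   0-based); parameters live in Theta, a subset of R^m = R^{(m+1)-1}. *)
Definition ORP m (k : 'I_m.+1) (Theta : 'rV[R]_m -> Prop)
    (Qt : 'rV[R]_m -> 'M[R]_m.+1) : Prop :=
  (forall th, Theta th -> orthogonal_mx (Qt th)) /\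
  (forall h : 'cV[R]_m.+1, h != 0 ->
     exists! th, Theta th /\ (Qt th)^T *m h = vnorm h *: delta_mx k 0).

Definition mu d (Qt : 'rV[R]_d -> 'M[R]_d.+1) th : R := Qt th 0 0.

(* "Active" index map for the embedding Q^(k), k0 = k-1 (0-based):
   row/column k0 corresponds to block index 0 (mu),
   rows/columns n..n+d-1 correspond to block indices 1..d (x, y, O~). *)
Definition act_idx n d (k0 : 'I_n) (i : 'I_(d + n)) : option 'I_d.+1 :=
  if (i == k0 :> nat) then Some ord0
  else if (n <= i)%N then Some (inord (i - n).+1) else None.

(* Q^(k)(theta) = I_{k-1} (+) [[mu,0,y^*],[0,I_{n-k},0],[x,0,O~]],
   written entrywise, as an (n+d) x (n+d) matrix (indexed by 'I_(d+n)). *)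
Definition embedQ n d (Qt : 'rV[R]_d -> 'M[R]_d.+1) (k0 : 'I_n) th
    : 'M[R]_(d + n) :=
  \matrix_(i, j)
    match act_idx k0 i, act_idx k0 j with
    | Some a, Some b => Qt th a b
    | _, _ => (i == j)%:R
    end.

Definition topId n d : 'M[R]_(d + n, n) :=
  \matrix_(i, j) ((i : nat) == (j : nat))%:R.

Definition Phi n d (Qt : 'rV[R]_d -> 'M[R]_d.+1)
    (ths : {ffun 'I_n -> 'rV[R]_d}) : 'M[R]_(d + n, n) :=
  foldl (fun M k0 => embedQ Qt k0 (ths k0) *m M) 1%:M (enum 'I_n) *m topId n d.

Definition stack n d (A : 'M[R]_n) (C : 'M[R]_(d, n)) : 'M[R]_(d + n, n) :=
  col_mx C A.

Definition OTSON n d (A : 'M[R]_n) (C : 'M[R]_(d, n)) : Prop :=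
  A^T *m A = 1%:M - C^T *m C /\
  (forall (i : 'I_(d + n)) (j : 'I_n), (i < j)%N -> stack A C i j = 0).

Definition diagQ n d (A : 'M[R]_n) (C : 'M[R]_(d, n)) (i : 'I_n) : R :=
  stack A C (widen_ord (leq_addl d n) i) i.

Definition unreduced_OTSON n d (A : 'M[R]_n) (C : 'M[R]_(d, n)) : Prop :=
  OTSON A C /\ forall i, diagQ A C i != 0.

Definition strict_OTSON n d (A : 'M[R]_n) (C : 'M[R]_(d, n)) : Prop :=
  OTSON A C /\ forall i, 0 < diagQ A C i.

Definition bij_onto n d (Theta : 'rV[R]_d -> Prop)
    (Qt : 'rV[R]_d -> 'M[R]_d.+1) (P : R -> Prop)
    (S : 'M[R]_n -> 'M[R]_(d, n) -> Prop) : Prop :=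
  let Dom := fun ths : {ffun 'I_n -> 'rV[R]_d} =>
               forall k, Theta (ths k) /\ P (mu Qt (ths k)) in
  (forall ths, Dom ths ->
     exists A C, Phi Qt ths = stack A C /\ S A C) /\
  (forall ths ths', Dom ths -> Dom ths' ->
     Phi Qt ths = Phi Qt ths' -> ths = ths') /\
  (forall A C, S A C -> exists ths, Dom ths /\ Phi Qt ths = stack A C).

End Defs.

From HB Require Import structures.
From mathcomp Require Import all_boot all_order all_algebra.
From mathcomp Require Import reals zify.
Set Implicit Arguments. Unset Strict Implicit. Unset Printing Implicit Defensive.
Import Order.TTheory GRing.Theory Num.Theory.
Local Open Scope ring_scope.

(** Q^(k) acts only on the coordinates k and n+1, ..., n+d, where it acts as
    Q~(theta_k).  Hence applying Q^(1), ..., Q^(m) to (I_n ; 0) yields a matrix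
    with orthonormal columns, zero above the diagonal, whose columns m+1, ..., n
    are still unit vectors, and whose column m is the first column of
    Q~(theta_m) spread over the active coordinates of Q^(m), with diagonal entry
    mu(theta_m).  Conversely, in such a "staircase" matrix orthonormality forces
    column m to live on those coordinates and to have norm 1; an ORP to e_1 is
    exactly a bijection theta |-> Q~(theta) e_1 onto the unit sphere, so a
    unique theta_m reproduces that column, and Q^(m)(theta_m)^T strips it back
    to e_m. *)

Section Embedding.
Variables (R : comPzRingType) (n d : nat).

(* The inverse of [act_idx k]: block index 0 goes to k, block index a > 0 to n + a - 1. *)
Lemma act_coord_subproof (k : 'I_n) (a : 'I_d.+1) :
  ((if a == ord0 then k : nat else (n + a).-1) < d + n)%N.
Proof. by case: a => [[|a] /= ?]; have := ltn_ord k; lia. Qed.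

Definition act_coord k a : 'I_(d + n) := Ordinal (act_coord_subproof k a).

Lemma act_idx_coord k a : act_idx k (act_coord k a) = Some a.
Proof.
rewrite /act_idx /=; case: a => [[|a] Ha] /=.
  by rewrite eqxx; congr Some; apply: val_inj.
have -> : ((n + a.+1).-1 == k :> nat) = false by have := ltn_ord k; lia.
by rewrite addnS leq_addr; congr Some; apply: val_inj; rewrite /= addKn inordK.
Qed.

Lemma act_coord_inj k : injective (act_coord k).
Proof.
by move=> a b eq_ab; have := act_idx_coord k a; rewrite eq_ab act_idx_coord => -[].
Qed.

Lemma act_coord0 k : act_coord k ord0 = widen_ord (leq_addl d n) k.
Proof. exact: val_inj. Qed.

Lemma act_coord_eq k a : ((act_coord k a : nat) == k) = (a == ord0).
Proof.
case: a => [[|a] Ha] /=; first by rewrite eqxx.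
by rewrite -[RHS](inj_eq val_inj) /=; have := ltn_ord k; lia.
Qed.

Lemma act_idxP (k : 'I_n) (i : 'I_(d + n)) :
  act_idx k i = None \/ exists a, i = act_coord k a.
Proof.
rewrite /act_idx; case: eqP => [ik | neq_ik].
  by right; exists ord0; apply: val_inj.
case: leqP => [le_ni | _]; [right | by left].
have lt_ind := ltn_ord i.
have a_gt0 : (inord (i - n).+1 : 'I_d.+1) != ord0.
  by rewrite -(inj_eq val_inj) /= inordK //; lia.
by exists (inord (i - n).+1); apply: val_inj; rewrite /= (negbTE a_gt0) inordK //; lia.
Qed.

Lemma act_idx_None (k : 'I_n) (i : 'I_(d + n)) :
  act_idx k i = None <-> (i < n)%N /\ (i : nat) != k.
Proof.
rewrite /act_idx; case: eqP => [-> | neq_ik]; first by split=> [|[]] //; rewrite eqxx.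
by case: leqP => [le_ni | lt_in]; split=> [|[]] //; rewrite ltnNge le_ni.
Qed.

Lemma act_idx_wid (k j : 'I_n) : j != k -> act_idx k (widen_ord (leq_addl d n) j) = None.
Proof.
by move=> ne_jk; apply/act_idx_None; split=> /=; [exact: ltn_ord | rewrite (inj_eq val_inj)].
Qed.

Lemma act_coord_idle k a (i : 'I_(d + n)) :
  act_idx k i = None -> (act_coord k a == i) = false.
Proof.
by move=> idle_i; apply/negbTE/eqP => eq_ai; move: idle_i; rewrite -eq_ai act_idx_coord.
Qed.

Lemma big_act_coord k (F : 'I_(d + n) -> R) :
  (forall i, act_idx k i = None -> F i = 0) -> \sum_i F i = \sum_a F (act_coord k a).
Proof.
move=> F_idle; rewrite (bigID (fun i => act_idx k i != None)) /=.
rewrite [X in _ + X]big1 ?addr0 => [|i /negPn/eqP]; last exact: F_idle.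
rewrite (reindex_omap (act_coord k) (act_idx k)) => [|i]; last first.
  by case: (act_idxP k i) => [-> | [a ->]] //; rewrite act_idx_coord.
by apply: eq_bigl => a; rewrite act_idx_coord eqxx.
Qed.

Definition embmx (k : 'I_n) (B : 'M[R]_d.+1) : 'M[R]_(d + n) :=
  \matrix_(i, j)
    match act_idx k i, act_idx k j with
    | Some a, Some b => B a b
    | _, _ => (i == j)%:R
    end.

Lemma mul_embmx_idle k B p (N : 'M[R]_(d + n, p)) i j :
  act_idx k i = None -> (embmx k B *m N) i j = N i j.
Proof.
move=> idle_i; rewrite !mxE (bigD1 i) //= !mxE idle_i eqxx mul1r big1 ?addr0 // => l ne_li.
by rewrite !mxE idle_i eq_sym (negbTE ne_li) mul0r.
Qed.

Lemma mul_embmx_act k B p (N : 'M[R]_(d + n, p)) a j :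
  (embmx k B *m N) (act_coord k a) j = \sum_b B a b * N (act_coord k b) j.
Proof.
rewrite !mxE (@big_act_coord k) => [|l idle_l]; last first.
  by rewrite !mxE act_idx_coord idle_l act_coord_idle // mul0r.
by apply: eq_bigr => b _; rewrite !mxE !act_idx_coord.
Qed.

Lemma embmx_mul k B C : embmx k B *m embmx k C = embmx k (B *m C).
Proof.
apply/matrixP => i j; case: (act_idxP k i) => [idle_i | [a ->]].
  by rewrite mul_embmx_idle // !mxE idle_i.
rewrite mul_embmx_act !mxE act_idx_coord; case: (act_idxP k j) => [idle_j | [c ->]].
  rewrite idle_j act_coord_idle // big1 // => b _.
  by rewrite !mxE act_idx_coord idle_j act_coord_idle // mulr0.
by rewrite act_idx_coord mxE; apply: eq_bigr => b _; rewrite mxE !act_idx_coord.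
Qed.

Lemma trmx_embmx k B : (embmx k B)^T = embmx k B^T.
Proof.
apply/matrixP => i j; rewrite !mxE.
by case: (act_idx k i); case: (act_idx k j) => *; rewrite ?mxE // eq_sym.
Qed.

Lemma embmx1 k : embmx k 1%:M = 1%:M.
Proof.
apply/matrixP => i j; rewrite !mxE.
case: (act_idxP k i) => [-> | [a ->]] //; rewrite act_idx_coord.
case: (act_idxP k j) => [-> | [b ->]] //.
by rewrite act_idx_coord mxE (inj_eq (@act_coord_inj k)).
Qed.

Lemma orthogonal_embmx k B : B^T *m B = 1%:M -> (embmx k B)^T *m embmx k B = 1%:M.
Proof. by move=> orthB; rewrite trmx_embmx embmx_mul orthB embmx1. Qed.

Lemma gram_embmx_mul k B p (N : 'M[R]_(d + n, p)) : B^T *m B = 1%:M ->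
  (embmx k B *m N)^T *m (embmx k B *m N) = N^T *m N.
Proof.
move=> orthB.
by rewrite trmx_mul -mulmxA [_^T *m (_ *m N)]mulmxA orthogonal_embmx ?mul1mx.
Qed.

Lemma mul_embmx_basis_col k B p (N : 'M[R]_(d + n, p)) j t :
  act_idx k t = None -> (forall i, N i j = (i == t)%:R) ->
  forall i, (embmx k B *m N) i j = (i == t)%:R.
Proof.
move=> idle_t Nj i; case: (act_idxP k i) => [idle_i | [a ->]].
  by rewrite mul_embmx_idle.
rewrite mul_embmx_act act_coord_idle // big1 // => b _.
by rewrite Nj act_coord_idle // mulr0.
Qed.

Lemma mul_embmx_unit_col (k : 'I_n) B p (N : 'M[R]_(d + n, p)) j :
  (forall i, N i j = ((i : nat) == k)%:R) ->
  forall a, (embmx k B *m N) (act_coord k a) j = B a ord0.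
Proof.
move=> Nj a; rewrite mul_embmx_act (bigD1 ord0) //= Nj act_coord_eq eqxx mulr1.
by rewrite big1 ?addr0 // => b /negbTE nz_b; rewrite Nj act_coord_eq nz_b mulr0.
Qed.

End Embedding.

Section Staircase.
Variables (R : realType) (n d : nat).

Local Notation wid := (widen_ord (leq_addl d n)).
Local Notation I0 := (@topId R n d).
Implicit Types (B : 'M[R]_d.+1) (N : 'M[R]_(d + n, n)).

Definition staircase m (N : 'M[R]_(d + n, n)) :=
  [/\ N^T *m N = 1%:M, is_trig_mx N &
      forall (j : 'I_n) i, (m <= j)%N -> N i j = I0 i j].

Lemma sum_topId_mul (i : 'I_n) (F : 'I_(d + n) -> R) :
  \sum_l I0 l i * F l = F (wid i).
Proof.
rewrite (bigD1 (wid i)) //= mxE eqxx mul1r big1 ?addr0 // => l ne_li.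
rewrite mxE (_ : (l == i :> nat) = false) ?mul0r //.
by apply: contraNF ne_li => /eqP eq_li; apply/eqP/val_inj.
Qed.

Lemma staircase_topId : staircase 0 I0.
Proof.
split=> //; last by apply/is_trig_mxP => i j lt_ij; rewrite mxE (ltn_eqF lt_ij).
apply/matrixP => i j; rewrite !mxE.
under eq_bigr do rewrite mxE.
by rewrite sum_topId_mul mxE.
Qed.

Lemma staircase_row m N (i j : 'I_n) :
  staircase m N -> (m <= i)%N -> i != j -> N (wid i) j = 0.
Proof.
case=> orthN _ idN le_mi ne_ij; have := congr1 (fun M : 'M[R]_n => M i j) orthN.
rewrite !mxE (negbTE ne_ij).
by under eq_bigr do rewrite mxE idN //; rewrite sum_topId_mul.
Qed.

Lemma topIdE i (j : 'I_n) : I0 i j = (i == wid j)%:R.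
Proof. by rewrite mxE -(inj_eq val_inj). Qed.

Lemma mul_embmx_topId_cols (k : 'I_n) B N :
  (forall (j : 'I_n) i, (k < j)%N -> N i j = I0 i j) ->
  forall (j : 'I_n) i, (k < j)%N -> (embmx k B *m N) i j = I0 i j.
Proof.
move=> idN j i lt_kj; have ne_jk : j != k by rewrite -(inj_eq val_inj) gtn_eqF.
rewrite topIdE; apply: mul_embmx_basis_col (act_idx_wid d ne_jk) _ i => i'.
by rewrite idN // topIdE.
Qed.

Lemma trig_embmx_mul (k : 'I_n) B N : is_trig_mx N ->
  (forall (j : 'I_n) i, (k < j)%N -> (embmx k B *m N) i j = I0 i j) ->
  is_trig_mx (embmx k B *m N).
Proof.
move=> /is_trig_mxP trigN idM; apply/is_trig_mxP => i j lt_ij.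
have [lt_kj | le_jk] := ltnP k j; first by rewrite idM // mxE (ltn_eqF lt_ij).
rewrite mul_embmx_idle ?trigN //; apply/act_idx_None.
by have := ltn_ord k; lia.
Qed.

Lemma staircase_embmx (k : 'I_n) B N : B^T *m B = 1%:M ->
  staircase k N -> staircase k.+1 (embmx k B *m N).
Proof.
move=> orthB [orthN trigN idN].
have idM := mul_embmx_topId_cols B (fun j i lt_kj => idN j i (ltnW lt_kj)).
by split=> //; [rewrite gram_embmx_mul | exact: trig_embmx_mul].
Qed.

Lemma staircase_embmx_col (k : 'I_n) B N a :
  staircase k N -> (embmx k B *m N) (act_coord k a) k = B a ord0.
Proof. by case=> _ _ idN; apply: mul_embmx_unit_col => i; rewrite idN // mxE. Qed.

Lemma staircase_col_idle (k : 'I_n) N i :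
  staircase k.+1 N -> act_idx k i = None -> N i k = 0.
Proof.
move=> stN /act_idx_None [lt_in ne_ik].
have [lt_ik | le_ki] := ltnP i k; first by have [_ /is_trig_mxP -> ] := stN.
have -> : i = wid (Ordinal lt_in) by apply: val_inj.
apply: staircase_row stN _ _; first by rewrite /= ltn_neqAle eq_sym ne_ik le_ki.
by rewrite -(inj_eq val_inj).
Qed.

Lemma staircase_embmx_tr (k : 'I_n) B N : B^T *m B = 1%:M -> staircase k.+1 N ->
  (forall a, N (act_coord k a) k = B a ord0) -> staircase k (embmx k B^T *m N).
Proof.
move=> orthB stN colN; have [orthN trigN idN] := stN.
have orthBt : B^T^T *m B^T = 1%:M by rewrite trmxK mulmx1C.
have idM := mul_embmx_topId_cols B^T idN.
split; [by rewrite gram_embmx_mul | exact: trig_embmx_mul |].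
move=> j i; rewrite leq_eqVlt => /orP[/eqP/val_inj <- | ]; last exact: idM.
case: (act_idxP k i) => [idle_i | [a ->]].
  rewrite mul_embmx_idle // (staircase_col_idle stN idle_i) mxE.
  by have [_ /negbTE ->] := (act_idx_None k i).1 idle_i.
rewrite mul_embmx_act mxE act_coord_eq.
have := congr1 (fun M : 'M[R]_d.+1 => M a ord0) orthB; rewrite mxE [RHS]mxE => <-.
by apply: eq_bigr => b _; rewrite !mxE colN.
Qed.

Lemma vnorm_act_col (k : 'I_n) N :
  staircase k.+1 N -> vnorm (\col_a N (act_coord k a) k) = 1.
Proof.
move=> stN; have [orthN _ _] := stN.
rewrite /vnorm -sqrtr1; congr Num.sqrt.
have := congr1 (fun M : 'M[R]_n => M k k) orthN; rewrite mxE [RHS]mxE eqxx mulr1n => <-.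
rewrite [RHS](big_act_coord (k := k)) => [|i idle_i]; last first.
  by rewrite mxE (staircase_col_idle stN idle_i) mul0r.
by apply: eq_bigr => a _; rewrite !mxE expr2.
Qed.

End Staircase.

Section Phi.
Variables (R : realType) (n d : nat).
Variables (Theta : 'rV[R]_d -> Prop) (Qt : 'rV[R]_d -> 'M[R]_d.+1).
Hypothesis ORP_Qt : ORP ord0 Theta Qt.

Local Notation wid := (widen_ord (leq_addl d n)).
Implicit Types (B : 'M[R]_d.+1) (N : 'M[R]_(d + n, n)) (ths : {ffun 'I_n -> 'rV[R]_d}).

Lemma vnorm_eq1_neq0 m (h : 'cV[R]_m) : vnorm h = 1 -> h != 0.
Proof.
apply: contra_eq_neq => ->; rewrite /vnorm big1 ?sqrtr0 1?eq_sym ?oner_neq0 // => i _.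
by rewrite mxE expr0n.
Qed.

Lemma vnorm_col0 B : B^T *m B = 1%:M -> vnorm (col ord0 B) = 1.
Proof.
move=> orthB; rewrite /vnorm -sqrtr1; congr Num.sqrt.
have := congr1 (fun M : 'M[R]_d.+1 => M ord0 ord0) orthB.
rewrite mxE [RHS]mxE eqxx mulr1n => <-.
by apply: eq_bigr => b _; rewrite !mxE expr2.
Qed.

Lemma orthogonal_Qt th : Theta th -> (Qt th)^T *m Qt th = 1%:M.
Proof. exact: ORP_Qt.1. Qed.

Lemma ORP_col0_inj th th' : Theta th -> Theta th' ->
  col ord0 (Qt th) = col ord0 (Qt th') -> th = th'.
Proof.
move=> Tth Tth' eq_col.
have reduces t : Theta t ->
    (Qt t)^T *m col ord0 (Qt t) = vnorm (col ord0 (Qt t)) *: delta_mx ord0 0.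
  by move=> Tt; rewrite vnorm_col0 ?orthogonal_Qt // scale1r colE mulmxA orthogonal_Qt ?mul1mx.
have nz_col := vnorm_eq1_neq0 (vnorm_col0 (orthogonal_Qt Tth)).
have [t [_ uniq_t]] := ORP_Qt.2 _ nz_col.
rewrite -(uniq_t th) ?(uniq_t th') //; split=> //; last exact: reduces.
by rewrite eq_col; apply: reduces.
Qed.

Lemma ORP_col0_surj (h : 'cV[R]_d.+1) :
  vnorm h = 1 -> exists2 th, Theta th & col ord0 (Qt th) = h.
Proof.
move=> nh; have [th [[Tth reduces] _]] := ORP_Qt.2 _ (vnorm_eq1_neq0 nh).
exists th => //; rewrite -[RHS]mul1mx -(mulmx1C (orthogonal_Qt Tth)) -mulmxA.
by rewrite reduces nh scale1r colE.
Qed.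

Lemma embedQE (k : 'I_n) th : embedQ Qt k th = embmx k (Qt th).
Proof. by []. Qed.

Definition phi_upto ths m : 'M[R]_(d + n, n) :=
  foldl (fun M k => embedQ Qt k (ths k) *m M) 1%:M (take m (enum 'I_n)) *m topId R n d.

Lemma phi_upto0 ths : phi_upto ths 0 = topId R n d.
Proof. by rewrite /phi_upto take0 mul1mx. Qed.

Lemma phi_uptoS ths m (lt_mn : (m < n)%N) :
  phi_upto ths m.+1 = embmx (Ordinal lt_mn) (Qt (ths (Ordinal lt_mn))) *m phi_upto ths m.
Proof.
rewrite /phi_upto (take_nth (Ordinal lt_mn)) ?size_enum_ord // foldl_rcons.
by rewrite (nth_ord_enum (Ordinal lt_mn) (Ordinal lt_mn)) embedQE mulmxA.
Qed.

Lemma Phi_phi_upto ths : Phi Qt ths = phi_upto ths n.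
Proof. by rewrite /Phi /phi_upto take_oversize // size_enum_ord. Qed.

Lemma eq_phi_upto ths ths' m : (m <= n)%N ->
  (forall k : 'I_n, (k < m)%N -> ths k = ths' k) -> phi_upto ths m = phi_upto ths' m.
Proof.
elim: m => [|m IH] le_mn eq_ths; first by rewrite !phi_upto0.
rewrite !(phi_uptoS _ le_mn) eq_ths // IH // => [|k lt_km]; first exact: ltnW.
exact/eq_ths/ltnW.
Qed.

Lemma staircase_phi_upto ths m : (m <= n)%N ->
  (forall k : 'I_n, (k < m)%N -> Theta (ths k)) ->
  staircase m (phi_upto ths m) /\
  forall j : 'I_n, (j < m)%N -> phi_upto ths m (wid j) j = mu Qt (ths j).
Proof.
elim: m => [|m IH] lt_mn Theta_ths.
  by rewrite phi_upto0; split=> [|//]; exact: staircase_topId.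
have [stN diagN] := IH (ltnW lt_mn) (fun k lt_km => Theta_ths k (ltnW lt_km)).
set k := Ordinal lt_mn.
have orthQ := orthogonal_Qt (Theta_ths k (ltnSn m)).
rewrite phi_uptoS; split=> [|j]; first exact: staircase_embmx.
rewrite ltnS leq_eqVlt => /orP[/eqP eq_jm | lt_jm].
  have -> : j = k by apply: val_inj.
  by rewrite -act_coord0 staircase_embmx_col.
have ne_jk : j != k by rewrite -(inj_eq val_inj) ltn_eqF.
by rewrite mul_embmx_idle ?act_idx_wid // diagN.
Qed.

Lemma phi_upto_inj ths ths' m : (m <= n)%N ->
  (forall k : 'I_n, (k < m)%N -> Theta (ths k) /\ Theta (ths' k)) ->
  phi_upto ths m = phi_upto ths' m -> forall k : 'I_n, (k < m)%N -> ths k = ths' k.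
Proof.
elim: m => [//|m IH] lt_mn Theta_ths eq_phi j lt_jm.
have Theta_lt (k : 'I_n) (lt_km : (k < m)%N) := Theta_ths k (ltnW lt_km).
have [stN _] := staircase_phi_upto (ltnW lt_mn) (fun k lt_km => (Theta_lt k lt_km).1).
have [stN' _] := staircase_phi_upto (ltnW lt_mn) (fun k lt_km => (Theta_lt k lt_km).2).
set k := Ordinal lt_mn; have [Tk Tk'] := Theta_ths k (ltnSn m).
move: eq_phi; rewrite !phi_uptoS => eq_phi.
have eq_k : ths k = ths' k.
  apply: ORP_col0_inj => //; apply/matrixP => a z; rewrite (ord1 z) !mxE.
  by rewrite -(staircase_embmx_col (k := k) _ _ stN) eq_phi staircase_embmx_col.
have eq_N : phi_upto ths m = phi_upto ths' m.
  move: eq_phi; rewrite eq_k => eq_phi.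
  have embQK := orthogonal_embmx k (orthogonal_Qt Tk').
  by rewrite -[LHS]mul1mx -[RHS]mul1mx -embQK -!mulmxA eq_phi.
have [lt_jm' | le_mj] := ltnP j m; first exact: IH (ltnW lt_mn) Theta_lt eq_N j lt_jm'.
by have -> : j = k by apply: val_inj => /=; lia.
Qed.

Lemma phi_upto_surj N m : (m <= n)%N -> staircase m N ->
  (forall j : 'I_n, (j < m)%N -> N (wid j) j != 0) ->
  exists ths, (forall k : 'I_n, (k < m)%N -> Theta (ths k) /\ mu Qt (ths k) = N (wid k) k)
    /\ phi_upto ths m = N.
Proof.
elim: m N => [|m IH] N lt_mn stN diagN.
  exists [ffun=> 0]; split=> //; rewrite phi_upto0; have [_ _ idN] := stN.
  by apply/matrixP => i j; rewrite idN.
set k := Ordinal lt_mn.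
have [th Tth col_th] := ORP_col0_surj (vnorm_act_col (k := k) stN).
have orthQ := orthogonal_Qt Tth.
have colN a : N (act_coord k a) k = Qt th a ord0.
  by have := congr1 (fun v : 'cV[R]_d.+1 => v a 0) col_th; rewrite !mxE.
have stN' := staircase_embmx_tr (k := k) orthQ stN colN.
have [|ths' [ths'P phi_ths']] := IH _ (ltnW lt_mn) stN'.
  move=> j lt_jm; have ne_jk : j != k by rewrite -(inj_eq val_inj) ltn_eqF.
  by rewrite mul_embmx_idle ?act_idx_wid //; apply/diagN/ltnW.
pose ths := [ffun i => if i == k then th else ths' i].
have ths_lt (j : 'I_n) : (j < m)%N -> ths j = ths' j.
  by move=> lt_jm; rewrite ffunE ifF // -(inj_eq val_inj) ltn_eqF.
exists ths; split.
  move=> j; rewrite ltnS leq_eqVlt => /orP[/eqP eq_jm | lt_jm].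
    have -> : j = k by apply: val_inj.
    by rewrite ffunE eqxx /mu -colN act_coord0.
  rewrite ths_lt //; have [Tj ->] := ths'P j lt_jm.
  by rewrite mul_embmx_idle // act_idx_wid // -(inj_eq val_inj) ltn_eqF.
rewrite phi_uptoS ffunE eqxx (eq_phi_upto (ltnW lt_mn) ths_lt) phi_ths'.
by rewrite mulmxA embmx_mul (mulmx1C orthQ) embmx1 mul1mx.
Qed.

Lemma trmx_stack_mul_stack (A : 'M[R]_n) (C : 'M[R]_(d, n)) :
  (stack A C)^T *m stack A C = C^T *m C + A^T *m A.
Proof. by rewrite /stack tr_col_mx mul_row_col. Qed.

Lemma OTSON_staircase (A : 'M[R]_n) (C : 'M[R]_(d, n)) :
  OTSON A C <-> staircase n (stack A C).
Proof.
split=> [[orthAC trigAC] | [orthS /is_trig_mxP trigS _]].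
  split; [by rewrite trmx_stack_mul_stack orthAC addrC subrK | exact/is_trig_mxP |].
  by move=> j i; rewrite leqNgt ltn_ord.
by split=> //; rewrite -orthS trmx_stack_mul_stack [C^T *m C + _]addrC addrK.
Qed.

Lemma Phi_bij_onto (P : R -> Prop) : (forall x, P x -> x != 0) ->
  bij_onto Theta Qt P
    (fun (A : 'M[R]_n) (C : 'M[R]_(d, n)) => OTSON A C /\ forall i, P (diagQ A C i)).
Proof.
move=> P_neq0; split; [|split].
- move=> ths dom_ths.
  have [stN diagN] := staircase_phi_upto (leqnn n) (fun k _ => (dom_ths k).1).
  exists (dsubmx (Phi Qt ths)), (usubmx (Phi Qt ths)).
  have eqS : Phi Qt ths = stack (dsubmx (Phi Qt ths)) (usubmx (Phi Qt ths)).
    by rewrite /stack vsubmxK.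
  split=> //; split; first by apply/OTSON_staircase; rewrite -eqS Phi_phi_upto.
  by move=> i; rewrite /diagQ -eqS Phi_phi_upto diagN //; have [] := dom_ths i.
- move=> ths ths' dom_ths dom_ths'; rewrite !Phi_phi_upto => eq_phi.
  apply/ffunP => k; apply: (phi_upto_inj (leqnn n) _ eq_phi) => // k' _.
  by split; [have [] := dom_ths k' | have [] := dom_ths' k'].
- move=> A C [/OTSON_staircase stS diagP].
  have [|ths [domP phi_ths]] := phi_upto_surj (leqnn n) stS.
    by move=> j _; apply/P_neq0/diagP.
  exists ths; split; last by rewrite Phi_phi_upto.
  by move=> k; have [Tk ->] := domP k (ltn_ord k); split=> //; apply: diagP.
Qed.

End Phi.

Theorem theorem6p4 (R : realType) (n d : nat)
    (Theta : 'rV[R]_d -> Prop) (Qt : 'rV[R]_d -> 'M[R]_d.+1) :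
  (1 <= d)%N -> (d <= n)%N ->
  ORP ord0 Theta Qt ->
  bij_onto Theta Qt (fun m => 0 < m) (@strict_OTSON R n d) /\
  bij_onto Theta Qt (fun m => m != 0) (@unreduced_OTSON R n d).
Proof.
move=> _ _ ORP_Qt; split.
  by apply: (Phi_bij_onto n ORP_Qt (P := fun m => 0 < m)) => x /lt0r_neq0.
exact: (Phi_bij_onto n ORP_Qt (P := fun m => m != 0)).
Qed.
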